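(* Let $\gamma$ be a gauge on $\mathbb{R}^d$ and $v\in\mathrm{SD}_\gamma$. Let $A\subset\mathbb{R}^d$ be a finite set with positive weights $w_a$, $a\in A$, and suppose all points of $A$ lie on a line parallel to $v$. Then the Fermat–Weber problem of minimizing $\sum_{a\in A}w_a\gamma(x-a)$ over $x\in\mathbb{R}^d$ has a minimizer lying on that line.
   Context: A gauge $\gamma$ on $\mathbb{R}^d$ is the Minkowski functional of a convex compact set $B_\gamma$ having the origin in its interior (not necessarily symmetric). Its skewness is $\sigma=\sup_{x\neq0}\gamma(x)/\gamma(-x)$ and the set of skewness directions is $\mathrm{SD}_\gamma=\{v:\gamma(v)=\sigma\gamma(-v)=1\}$. *)

From HB Require Import structures.
From mathcomp Require Import all_boot all_order all_algebra.
From mathcomp Require Import all_classical all_reals all_analysis.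
From mathcomp Require Import finmap.
Set Implicit Arguments. Unset Strict Implicit. Unset Printing Implicit Defensive.
Import Order.TTheory GRing.Theory Num.Theory.
Local Open Scope classical_set_scope.
Local Open Scope ring_scope.

Definition convexB {R : realType} {d : nat} (B : set 'rV[R^o]_d) : Prop :=
  forall x y, B x -> B y -> forall t : R, 0 <= t <= 1 ->
    B ((1 - t) *: x + t *: y).

Definition gauge_body {R : realType} {d : nat} (B : set 'rV[R^o]_d) : Prop :=
  [/\ convexB B, compact B & interior B 0].

Definition gaugeB {R : realType} {d : nat} (B : set 'rV[R^o]_d)
  (x : 'rV[R^o]_d) : R :=
  inf [set t : R | 0 < t /\ B (t^-1 *: x)].

Definition skewness {R : realType} {d : nat} (B : set 'rV[R^o]_d) : R :=
  sup [set gaugeB B x / gaugeB B (- x) | x in [set x | x != 0]].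

Definition skew_dirs {R : realType} {d : nat} (B : set 'rV[R^o]_d)
  : set 'rV[R^o]_d :=
  [set v | gaugeB B v = 1 /\ skewness B * gaugeB B (- v) = 1].

(* Write gamma for the gauge of the body B, sigma for its skewness and let v be
   a skewness direction, so gamma v = 1 and gamma (- v) = 1 / sigma.
   1. From the definition of gamma as a Minkowski functional we derive its basic
      properties: positive homogeneity, subadditivity, positivity off 0 and the
      skewness bound gamma z <= sigma * gamma (- z).
   2. On the line spanned by v the gauge is the piecewise linear profile
      gamma (u *: v) = max(u, - u / sigma).
   3. Projection onto the line: for every y there is c such that
      max(c - r, (r - c) / sigma) <= gamma (y - r *: v) for all r.  Setting
      h r = gamma (y - r *: v), the triangle inequality through the point r1 v
      and the skewness bound give r1 - sigma h r1 <= r2 + h r2, and c is the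
      supremum of the left-hand sides.
   4. A weighted sum of shifted copies of a continuous function that decreases
      on ]-oo, 0] and increases on [0, +oo[ attains its minimum on R.
   Writing the data points as p + s_a *: v, step 3 (with a common c for all a)
   bounds the objective at any x from below by its value at p + c *: v, which by
   step 2 is a one-dimensional sum as in step 4; its minimiser is the answer. *)
From HB Require Import structures.
From mathcomp Require Import all_boot all_order all_algebra.
From mathcomp Require Import all_classical all_reals all_analysis.
From mathcomp Require Import finmap.
From mathcomp Require Import ring lra.
Set Implicit Arguments. Unset Strict Implicit. Unset Printing Implicit Defensive.
Import Order.TTheory GRing.Theory Num.Theory numFieldNormedType.Exports.
Local Open Scope classical_set_scope.
Local Open Scope ring_scope.

Section GaugeFunctional.
Variables (R : realType) (d : nat) (B : set 'rV[R^o]_d).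
Local Notation gamma := (gaugeB B).

Lemma gauge_le z t : 0 < t -> B (t^-1 *: z) -> gamma z <= t.
Proof. by move=> t0 Bt; apply: ge_inf => //; exists 0 => u [u0 _]; exact: ltW. Qed.

Lemma gauge_ge0 z : 0 <= gamma z.
Proof.
rewrite /gaugeB.
have [[t Ht]|none] :=
  pselect (exists t, [set t : R | 0 < t /\ B (t^-1 *: z)] t).
  by apply: lb_le_inf; [exists t | move=> u [u0 _]; exact: ltW].
rewrite (_ : [set t : R | 0 < t /\ B (t^-1 *: z)] = set0) ?inf0 //.
by apply/seteqP; split => u Hu //; exfalso; apply: none; exists u.
Qed.

Hypothesis hB : gauge_body B.

(* B absorbs every vector, since it contains a ball around the origin. *)
Lemma gauge_absorbing z : exists t, 0 < t /\ B (t^-1 *: z).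
Proof.
have [_ _ /nbhs_ballP [r /= r0 Hr]] := hB.
exists ((`|z| + 1) / r); split; first by rewrite divr_gt0 // ltr_pwDr.
apply: Hr; rewrite -ball_normE /= sub0r normrN normrZ invf_div.
rewrite ger0_norm; last by rewrite divr_ge0 ?addr_ge0 // ltW.
by rewrite mulrAC ltr_pdivrMr ?ltr_pwDr // ltr_pM2l // ltrDl.
Qed.

Lemma gauge_ge z c :
  (forall t, 0 < t -> B (t^-1 *: z) -> c <= t) -> c <= gamma z.
Proof.
move=> H; apply: lb_le_inf; last by move=> u [u0 Bu]; exact: H.
by have [t Ht] := gauge_absorbing z; exists t.
Qed.

Lemma gaugeZ k z : 0 < k -> gamma (k *: z) = k * gamma z.
Proof.
move=> k0; apply/eqP; rewrite eq_le; apply/andP; split.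
  rewrite mulrC -ler_pdivrMr //; apply: gauge_ge => t t0 Bt.
  rewrite ler_pdivrMr //; apply: gauge_le; first exact: mulr_gt0.
  by rewrite scalerA invfM mulfVK ?gt_eqF.
apply: gauge_ge => t t0 Bt; rewrite -ler_pdivlMl //.
apply: gauge_le; first by rewrite mulr_gt0 ?invr_gt0.
by rewrite invfM invrK; move: Bt; rewrite scalerA mulrC.
Qed.

Lemma gauge0 : gamma 0 = 0.
Proof. by have := @gaugeZ 2 0 (ltr0Sn R 1); rewrite scaler0; lra. Qed.

(* Subadditivity: if x / s and y / t lie in B, then (x + y) / (s + t) is a
   convex combination of them. *)
Lemma gaugeD x y : gamma (x + y) <= gamma x + gamma y.
Proof.
have [convB _ _] := hB.
have has_infB z : has_inf [set t : R | 0 < t /\ B (t^-1 *: z)].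
  split; first by have [t Ht] := gauge_absorbing z; exists t.
  by exists 0 => u [u0 _]; exact: ltW.
apply/ler_addgt0Pr => e e0; have e2 : 0 < e / 2 by rewrite divr_gt0.
have [s [s0 Bs] hs] := inf_adherent e2 (has_infB x).
have [t [t0 Bt] ht] := inf_adherent e2 (has_infB y).
have st0 : 0 < s + t by exact: addr_gt0.
apply: (@le_trans _ _ (s + t)); last by rewrite /gaugeB in hs ht *; lra.
apply: gauge_le => //.
have -> : (s + t)^-1 *: (x + y) =
    (1 - t / (s + t)) *: (s^-1 *: x) + (t / (s + t)) *: (t^-1 *: y).
  have [sn0 tn0 stn0] : [/\ s != 0, t != 0 & s + t != 0] by rewrite !gt_eqF.
  rewrite !scalerA scalerDr; congr (_ *: _ + _ *: _); apply/esym.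
    by field; rewrite sn0 stn0.
  by field; rewrite tn0 stn0.
apply: convB => //; rewrite divr_ge0 ?ltW //=.
by rewrite ltr_pdivrMr // mul1r ltrDr.
Qed.

(* B is bounded, so the gauge is positive off the origin. *)
Lemma gauge_gt0 z : z != 0 -> 0 < gamma z.
Proof.
move=> z0; have [_ /compact_bounded [M [Mreal HM]] _] := hB.
have M0 : 0 < `|M| + 1 by rewrite ltr_pwDr.
have /HM HB : M < `|M| + 1.
  by apply: le_lt_trans (real_ler_norm Mreal) _; rewrite ltrDl.
apply: (@lt_le_trans _ _ (`|z| / (`|M| + 1))).
  by rewrite divr_gt0 ?normr_gt0.
apply: gauge_ge => t t0 /HB /=; rewrite normrZ gtr0_norm ?invr_gt0 //.
by rewrite ler_pdivrMl // => h; rewrite ler_pdivrMr // mulrC -ler_pdivrMl.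
Qed.

Lemma gauge_skew z : 0 < skewness B -> gamma z <= skewness B * gamma (- z).
Proof.
move=> s0; have [->|z0] := eqVneq z 0; first by rewrite oppr0 gauge0 mulr0.
have hs : has_sup [set gamma x / gamma (- x) | x in [set x | x != 0]].
  by apply: contrapT => hns; move: s0; rewrite /skewness sup_out // ltxx.
have := ub_le_sup hs.2 (ex_intro2 _ _ z z0 erefl).
by rewrite ler_pdivrMr ?gauge_gt0 ?oppr_eq0 // mulrC.
Qed.

End GaugeFunctional.

(* The profile of a gauge along a skewness direction: slope 1 forwards and
   slope 1 / sigma backwards. *)
Definition line_profile (R : realType) (sigma u : R) : R :=
  Num.max u (- u / sigma).

Lemma line_profile_ge0 (R : realType) (sigma u : R) :
  0 < sigma -> 0 <= u -> line_profile sigma u = u.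
Proof.
move=> s0 u0; apply/max_idPl.
by have := divr_ge0 u0 (ltW s0); rewrite mulNr; lra.
Qed.

Lemma line_profile_le0 (R : realType) (sigma u : R) :
  0 < sigma -> u <= 0 -> line_profile sigma u = - u / sigma.
Proof.
move=> s0 u0; apply/max_idPr.
have : 0 <= - u by rewrite oppr_ge0.
by move=> /divr_ge0 /(_ (ltW s0)); lra.
Qed.

Section SkewnessDirection.
Variables (R : realType) (d : nat) (B : set 'rV[R^o]_d).
Hypothesis hB : gauge_body B.
Variable v : 'rV[R^o]_d.
Hypothesis hv : skew_dirs B v.
Local Notation gamma := (gaugeB B).
Local Notation sigma := (skewness B).

(* sigma * gamma (- v) = 1 with gamma >= 0 forces sigma > 0. *)
Lemma skewness_gt0 : 0 < sigma.
Proof.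
have [_ hv1] := hv; rewrite ltNge; apply/negP => h.
by have := mulr_le0_ge0 h (gauge_ge0 B (- v)); rewrite hv1 ler10.
Qed.

(* Along v the gauge is the profile: gamma v = 1 and gamma (- v) = 1 / sigma,
   extended by positive homogeneity. *)
Lemma gauge_line u : gamma (u *: v) = line_profile sigma u.
Proof.
have s0 := skewness_gt0; have [gv1 hv1] := hv.
have gvN : gamma (- v) = sigma^-1 by rewrite -[RHS]mulr1 -hv1 mulKf ?gt_eqF.
have [u0|u0|->] := ltgtP u 0.
- rewrite line_profile_le0 ?ltW // -[u *: v]opprK -scalerN -scaleNr.
  by rewrite gaugeZ ?oppr_gt0 // gvN.
- by rewrite line_profile_ge0 ?ltW // gaugeZ // gv1 mulr1.
- by rewrite scale0r gauge0 // line_profile_ge0.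
Qed.

Lemma gauge_line_shift y r1 r2 :
  r1 - sigma * gamma (y - r1 *: v) <= r2 + gamma (y - r2 *: v).
Proof.
have s0 := skewness_gt0.
have h1 := gauge_ge0 B (y - r1 *: v); have h2 := gauge_ge0 B (y - r2 *: v).
have [le12|lt21] := leP r1 r2; first by have := mulr_ge0 (ltW s0) h1; lra.
have skew1 : gamma (r1 *: v - y) <= sigma * gamma (y - r1 *: v).
  by rewrite -[in X in _ <= X](opprB (r1 *: v)); exact: gauge_skew.
have r21 : 0 <= r1 - r2 by rewrite subr_ge0 ltW.
have := gaugeD hB (r1 *: v - y) (y - r2 *: v).
by rewrite addrA subrK -scalerBl gauge_line line_profile_ge0 //; lra.
Qed.

Lemma gauge_line_projection y :
  exists c, forall r, line_profile sigma (c - r) <= gamma (y - r *: v).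
Proof.
have s0 := skewness_gt0.
pose h r := gamma (y - r *: v).
pose S := [set r - sigma * h r | r in [set: R]].
have S_ub : has_ubound S.
  by exists (0 + h 0) => _ [r _ <-]; exact: gauge_line_shift.
have le_sup r : r - sigma * h r <= sup S by apply: (ub_le_sup S_ub); exists r.
have sup_le r : sup S <= r + h r.
  apply: ge_sup; first by exists (0 - sigma * h 0), 0.
  by move=> _ [r' _ <-]; exact: gauge_line_shift.
exists (sup S) => r; rewrite ge_max; apply/andP; split.
  by have := sup_le r; rewrite /h; lra.
by rewrite ler_pdivrMr //; have := le_sup r; rewrite /h; lra.
Qed.

Lemma objective_on_line (r : seq 'rV[R^o]_d) (w s : 'rV[R^o]_d -> R) p t :
  (forall a, a \in r -> a = p + s a *: v) ->
  \sum_(a <- r) w a * gamma (p + t *: v - a)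
    = \sum_(a <- r) w a * line_profile sigma (t - s a).
Proof.
move=> on_line; rewrite big_seq [RHS]big_seq; apply: eq_bigr => a ar.
have -> : p + t *: v - a = (t - s a) *: v.
  by rewrite {1}(on_line a ar) opprD addrACA subrr add0r scalerBl.
by rewrite gauge_line.
Qed.

Lemma objective_projection (r : seq 'rV[R^o]_d) (w s : 'rV[R^o]_d -> R) p x :
  (forall a, a \in r -> 0 <= w a) -> (forall a, a \in r -> a = p + s a *: v) ->
  exists c, \sum_(a <- r) w a * line_profile sigma (c - s a)
              <= \sum_(a <- r) w a * gamma (x - a).
Proof.
move=> w0 on_line; have [c hc] := gauge_line_projection (x - p).
exists c; rewrite big_seq [leRHS]big_seq; apply: ler_sum => a ar.
rewrite ler_wpM2l ?w0 //.
by rewrite {2}(on_line a ar) opprD addrA; exact: hc.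
Qed.

End SkewnessDirection.

Section ShiftedSums.
Variables (R : realType) (phi : R -> R).
Hypothesis phi_cont : continuous phi.
Hypothesis phi_decr : forall u u', u <= u' <= 0 -> phi u' <= phi u.
Hypothesis phi_incr : forall u u', 0 <= u <= u' -> phi u <= phi u'.

(* A nonnegatively weighted sum of translates of phi is minimised on the
   interval [-K, K] containing all centres, where it attains its minimum by the
   extreme value theorem; outside that interval every term only grows. *)
Lemma shifted_sum_has_min (T : eqType) (r : seq T) (w s : T -> R) :
  (forall a, a \in r -> 0 <= w a) ->
  exists tm, forall t,
    \sum_(a <- r) w a * phi (tm - s a) <= \sum_(a <- r) w a * phi (t - s a).
Proof.
move=> w0; pose F t := \sum_(a <- r) w a * phi (t - s a).
pose K : R := \big[Order.max/0]_(a <- r) `|s a|.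
have sK a : a \in r -> - K <= s a <= K.
  move=> ar; rewrite -ler_norml.
  exact: (le_bigmax_seq _ a xpredT (fun a => `|s a|)).
have K0 : - K <= K by have : 0 <= K := bigmax_ge_id r 0 xpredT _; lra.
have F_cont : continuous F.
  apply: continuous_big => [|a _ t]; first exact: add_continuous.
  apply: (@continuousM _ _ (fun=> w a) (fun t => phi (t - s a))).
    exact: cst_continuous.
  apply: (@continuous_comp _ _ _ (fun t => t - s a) phi); last exact: phi_cont.
  apply: (@continuousB _ _ _ id (fun=> s a)); first exact: cvg_id.
  exact: cst_continuous.
have [tm tmK tmin] := EVT_min K0 (continuous_subspaceT F_cont).
have termwise t t' : (forall a, a \in r -> phi (t - s a) <= phi (t' - s a)) ->
    F t <= F t'.
  move=> le_phi; rewrite /F big_seq [leRHS]big_seq.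
  by apply: ler_sum => a ar; rewrite ler_wpM2l ?w0 ?le_phi.
exists tm => t; have [tK|tK] := leP t K; last first.
  apply: le_trans (tmin K _) _; first by rewrite in_itv /= K0 lexx.
  apply: termwise => a /sK sa; apply: phi_incr; lra.
have [Kt|Kt] := leP (- K) t; first by apply: tmin; rewrite in_itv /= Kt tK.
apply: le_trans (tmin (- K) _) _; first by rewrite in_itv /= K0 lexx.
apply: termwise => a /sK sa; apply: phi_decr; lra.
Qed.

End ShiftedSums.

Lemma line_profile_continuous (R : realType) (sigma : R) :
  continuous (line_profile sigma).
Proof.
move=> u; apply: (@continuous_max _ _ id (fun u => - u / sigma)).
  exact: cvg_id.
apply: (@continuousM _ _ (fun u => - u) (fun=> sigma^-1)).
  by apply: (@continuousN _ _ _ id); exact: cvg_id.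
exact: cst_continuous.
Qed.

Lemma line_profile_has_min (R : realType) (sigma : R) (T : eqType) (r : seq T)
    (w s : T -> R) :
  0 < sigma -> (forall a, a \in r -> 0 <= w a) ->
  exists tm, forall t, \sum_(a <- r) w a * line_profile sigma (tm - s a)
                    <= \sum_(a <- r) w a * line_profile sigma (t - s a).
Proof.
move=> s0; apply: shifted_sum_has_min; first exact: line_profile_continuous.
  move=> u u' /andP[uu' u'0]; rewrite !line_profile_le0 ?(le_trans uu') //.
  by rewrite ler_pM2r ?invr_gt0 // lerN2.
by move=> u u' /andP[u0 uu']; rewrite !line_profile_ge0 ?(le_trans u0).
Qed.

Theorem mainTheorem2 (R : realType) (d : nat) (B : set 'rV[R^o]_d)
  (hB : gauge_body B) (v : 'rV[R^o]_d) (hv : skew_dirs B v)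
  (A : {fset 'rV[R^o]_d}) (w : 'rV[R^o]_d -> R)
  (hw : forall a, a \in A -> 0 < w a)
  (p : 'rV[R^o]_d) (hline : forall a, a \in A -> exists t : R, a = p + t *: v) :
  exists t : R, forall x : 'rV[R^o]_d,
    \sum_(a <- A) w a * gaugeB B (p + t *: v - a)
      <= \sum_(a <- A) w a * gaugeB B (x - a).
Proof.
pose s a := xget 0 [set t : R | a = p + t *: v].
have on_line a : a \in A -> a = p + s a *: v.
  by move=> aA; exact: (xgetPex 0 (hline a aA)).
have w0 a : a \in A -> 0 <= w a by move/hw/ltW.
have [t tmin] := line_profile_has_min s (skewness_gt0 hv) w0.
exists t => x; rewrite (objective_on_line hB hv _ _ on_line).
have [c hc] := objective_projection hB hv x w0 on_line.
exact: le_trans (tmin c) hc.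
Qed.
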